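(* Let $(X,d,\mu)$ be geometrically doubling and upper doubling with dominating function $\lambda$, fix $\varrho>1$, and let $\alpha,\beta\ge2$. There is a constant $C$ depending only on the constants of the space and on $\varrho,\alpha,\beta$ such that: if $f\in L^1_{\mathrm{loc}}(\mu)$, $A\ge 0$ and numbers $(f_B)_B$ satisfy the $\mathrm{RBMO}(\mu)$ conditions with constant $A$, then for every $(\alpha,\beta)$-doubling ball $B$, $$\Big|\frac{1}{\mu(B)}\int_Bf\,d\mu-f_B\Big|\le CA.$$
   Context: Balls $B=B(x,r)=\{y:d(y,x)<r\}$ have specified centre $c_B=x$ and radius $r_B=r>0$; $tB:=B(x,tr)$. Geometrically doubling: there is $N$ such that every ball $B(x,r)$ is covered by at most $N$ balls of radius $r/2$. Upper doubling: $\mu$ is a Borel measure, finite on bounded sets, and $\lambda:X\times(0,\infty)\to(0,\infty)$ satisfies $r\mapsto\lambda(x,r)$ non-decreasing, $\lambda(x,2r)\le C_\lambda\lambda(x,r)$, $\mu(B(x,r))\le\lambda(x,r)$. A ball $B$ is $(\alpha,\beta)$-doubling if $\mu(\alpha B)\le\beta\mu(B)$. The $\mathrm{RBMO}(\mu)$ conditions with constant $A$ (parameter $\varrho$) on $f$ and numbers $f_B$: $\frac{1}{\mu(\varrho B)}\int_B|f-f_B|\,d\mu\le A$ for all balls $B$, and $|f_B-f_{B_1}|\le A\{1+\int_{2B_1\setminus B}\frac{d\mu(x)}{\lambda(c_B,d(x,c_B))}\}$ whenever $B\subset B_1$. $\|f\|_{\mathrm{RBMO}}$ is the infimum of admissible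 $A$. *)

From HB Require Import structures.
From mathcomp Require Import all_boot all_order all_algebra.
From mathcomp Require Import all_classical all_reals all_analysis.
Set Implicit Arguments. Unset Strict Implicit. Unset Printing Implicit Defensive.
Import Order.TTheory GRing.Theory Num.Theory.
Local Open Scope classical_set_scope.
Local Open Scope ring_scope.

Section Defs.
Context {R : realType} {d0 : measure_display} {X : measurableType d0}.
Variable dist : X -> X -> R.

Definition is_metric : Prop :=
  [/\ (forall x y, dist x y = 0 <-> x = y),
      (forall x y, dist x y = dist y x) &
      (forall x y z, dist x z <= dist x y + dist y z)].

Definition ball_d (x : X) (r : R) : set X := [set y | dist y x < r].

Definition geom_doubling (N : nat) : Prop :=
  forall x r, 0 < r -> exists s : seq X,
    (size s <= N)%N /\ ball_d x r `<=` \bigcup_(y in [set` s]) ball_d y (r / 2).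

Definition upper_doubling (mu : {measure set X -> \bar R}) (lam : X -> R -> R)
  (Clam : R) : Prop :=
  [/\ (forall x (r : R), 0 < r -> (mu (ball_d x r) < +oo)%E),
      (forall x r, 0 < r -> 0 < lam x r),
      (forall x r s, 0 < r -> r <= s -> lam x r <= lam x s),
      (forall x r, 0 < r -> lam x (2 * r) <= Clam * lam x r) &
      (forall x (r : R), 0 < r -> (mu (ball_d x r) <= (lam x r)%:E)%E)].

Definition L1loc (mu : {measure set X -> \bar R}) (f : X -> R) : Prop :=
  forall x r, 0 < r -> mu.-integrable (ball_d x r) (EFin \o f).

(* the two RBMO(mu) conditions with constant A, parameter rho,
   for the numbers fB x r  (= f_B for the ball B = B(x,r)) *)
Definition RBMO_cond (mu : {measure set X -> \bar R}) (lam : X -> R -> R)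
  (rho : R) (f : X -> R) (fB : X -> R -> R) (A : R) : Prop :=
  (forall x (r : R), 0 < r ->
     (\int[mu]_(y in ball_d x r) (`|f y - fB x r|)%:E
        <= A%:E * mu (ball_d x (rho * r)))%E) /\
  (forall x (r : R) x1 (r1 : R), 0 < r -> 0 < r1 -> ball_d x r `<=` ball_d x1 r1 ->
     ((`|fB x r - fB x1 r1|)%:E
       <= A%:E * (1 + \int[mu]_(y in ball_d x1 (2 * r1) `\` ball_d x r)
                          ((lam x (dist y x))^-1)%:E))%E).

Definition doubling_ball (mu : {measure set X -> \bar R}) (alpha beta : R)
  (x : X) (r : R) : Prop :=
  (mu (ball_d x (alpha * r)) <= beta%:E * mu (ball_d x r))%E.

End Defs.

From HB Require Import structures.
From mathcomp Require Import all_boot all_order all_algebra.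
From mathcomp Require Import all_classical all_reals all_analysis.
From mathcomp Require Import measurable_realfun.
From mathcomp Require Import ring lra.
Import Order.TTheory GRing.Theory Num.Theory.
Local Open Scope classical_set_scope.
Local Open Scope ring_scope.

(* Choose m with 2^m >= 1 + rho and cover B = B(x, r) by at most N^m balls
   B_i of radius t = r / 2^m.  A ball B_i meeting B has rho B_i inside
   alpha B, so the first RBMO condition gives
   int_{B_i} |f - f_{B_i}| <= A mu(alpha B).  Comparing f_{B_i} and f_B with
   f_{2B} through the second condition costs A (1 + C_lam^k), because the
   annulus integrals of 1 / lam are bounded by lam(2^k s) / lam(s)
   <= C_lam^k.  Summing over the cover and using mu(alpha B) <= beta mu(B)
   gives int_B |f - f_B| <= C A mu(B), which bounds the deviation of the
   mean of f over B from f_B. *)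

Section integral_bounds.
Context {d : measure_display} {T : measurableType d} {R : realType}.
Variable mu : {measure set T -> \bar R}.
Local Open Scope ereal_scope.

(* No measurability is needed: the nonnegative integral is a supremum over
   simple minorants. *)
Lemma ge0_le_integral_nomf (D : set T) (f1 f2 : T -> \bar R) :
  (forall x, D x -> 0 <= f1 x) -> (forall x, D x -> f1 x <= f2 x) ->
  \int[mu]_(x in D) f1 x <= \int[mu]_(x in D) f2 x.
Proof.
move=> f10 f12.
have h1 x : 0 <= (f1 \_ D) x by apply: erestrict_ge0.
have h2 x : 0 <= (f2 \_ D) x.
  by apply: erestrict_ge0 => t Dt; exact: le_trans (f10 _ Dt) (f12 _ Dt).
rewrite !(integral_mkcond D) !ge0_integralTE//.
apply: ereal_sup_le => _ [h hf <-]; exists h => // x.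
apply: le_trans (hf x) _; rewrite /patch; case: ifP => // /[!inE] Dx; exact: f12.
Qed.

Lemma ge0_integral_le_sum_cover {I : eqType} {s : seq I} {D : I -> set T}
    {B : set T} {g : T -> \bar R} :
  measurable B -> (forall i, measurable (D i)) -> measurable_fun B g ->
  (forall z, B z -> 0 <= g z) -> B `<=` \bigcup_(i in [set` s]) D i ->
  \int[mu]_(z in B) g z <= \sum_(i <- s) \int[mu]_(z in D i `&` B) g z.
Proof.
move=> mB mD mg g0 Bs.
have gD0 i z : B z -> 0 <= (g \_ (D i)) z.
  by move=> Bz; rewrite /patch; case: ifP => // _; exact: g0.
rewrite (eq_bigr (fun i => \int[mu]_(z in B) (g \_ (D i)) z)); last first.
  by move=> i _; rewrite integral_mkcondl.
rewrite -ge0_integral_sum//; last first.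
  move=> i; apply/(measurable_restrict g (mD i) mB).
  exact: measurable_funS mg => //; exact: subIsetl.
apply: ge0_le_integral_nomf => // z Bz; have [y ys Dyz] := Bs z Bz.
rewrite (perm_big _ (perm_to_rem ys)) big_cons {1}/patch mem_set//.
by rewrite leeDl// sume_ge0// => i _; exact: gD0.
Qed.

Lemma normr_mean_sub_le (B : set T) (f : T -> R) (c M : R) :
  measurable B -> mu.-integrable B (EFin \o f) -> 0 < mu B -> mu B < +oo ->
  \int[mu]_(z in B) (`|f z - c|)%:E <= M%:E ->
  (`|(fine (mu B))^-1 * Rintegral mu B f - c| <= M / fine (mu B))%R.
Proof.
move=> mB intf muB0 muBoo le_M.
have mBE : mu B = (fine (mu B))%:E by rewrite fineK// ge0_fin_numE// ltW.
have mB0 : (0 < fine (mu B))%R by rewrite -lte_fin -mBE.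
have intc : mu.-integrable B (EFin \o cst c).
  apply/integrableP; split; first exact: measurableT_comp.
  rewrite (eq_integral (cst (`|c|)%:E)) // integral_cst//.
  by rewrite mBE -EFinM ltry.
have intfc : mu.-integrable B (EFin \o (fun z => f z - c)%R).
  by apply: eq_integrable mB _ _ _ (integrableB mB intf intc) => z _.
have int_norm_fin : \int[mu]_(z in B) (`|f z - c|)%:E \is a fin_num.
  by rewrite ge0_fin_numE ?integral_ge0// (le_lt_trans le_M)// ltry.
have int_norm_le : (\int[mu]_(z in B) `|f z - c| <= M)%R.
  by rewrite -lee_fin /Rintegral fineK.
have -> : ((fine (mu B))^-1 * Rintegral mu B f - c =
    (fine (mu B))^-1 * (Rintegral mu B f - c * fine (mu B)))%R.
  by field; exact: lt0r_neq0.
rewrite normrM gtr0_norm ?invr_gt0//.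
rewrite mulrC ler_pM2r ?invr_gt0// -Rintegral_cst// -RintegralB//.
exact: le_trans (le_normr_Rintegral mB intfc) int_norm_le.
Qed.

End integral_bounds.

Lemma le_exp2_truncnS (R : realType) (a : R) : 0 <= a -> a <= 2 ^+ (Num.truncn a).+1.
Proof.
move=> a0; have /andP [_ lt_trunc] := truncn_itv a0.
apply: le_trans (ltW lt_trunc) _.
by rewrite -natrX ler_nat ltnW // ltn_expl.
Qed.

Section doubling.
Context {R : realType} {d0 : measure_display} {X : measurableType d0}.
Context {dist : X -> X -> R}.

Lemma geom_doubling_iter {N x r} k : geom_doubling dist N -> 0 < r ->
  exists s : seq X, (size s <= N ^ k)%N /\
    ball_d dist x r `<=` \bigcup_(y in [set` s]) ball_d dist y (r / 2 ^+ k).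
Proof.
move=> gd r0; elim: k => [|k [s [ss cs]]].
  exists [:: x]; split => // z Bz; exists x; first exact: mem_head.
  by rewrite expr0 divr1.
have rk0 : 0 < r / 2 ^+ k by rewrite divr_gt0 // exprn_gt0.
have /choice [e he] := fun y : X => gd y (r / 2 ^+ k) rk0.
exists (flatten (map e s)); split.
  rewrite size_flatten /shape -map_comp.
  have size_le : (sumn [seq (size \o e) i | i <- s] <= size s * N)%N.
    elim: (s) => //= h t IH; rewrite mulSn; exact: leq_add (he h).1 IH.
  apply: leq_trans size_le _; rewrite expnSr; exact: leq_mul ss (leqnn N).
move=> z /cs [y /= ys /(he y).2 [w /= ws Bw]].
exists w; first by apply/flattenP; exists (e y) => //; apply/mapP; exists y.
by move: Bw; rewrite /ball_d /= exprSr invfM mulrA.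
Qed.

Context {mu : {measure set X -> \bar R}} {lam : X -> R -> R} {Clam : R}.
Hypothesis ud : upper_doubling dist mu lam Clam.

Lemma upper_doubling_const_gt0 (y : X) : 0 < Clam.
Proof.
case: ud => _ lam_gt0 _ lam2 _.
have := lt_le_trans (lam_gt0 y (2 * 1) (mulr_gt0 (ltr0Sn _ 1) ltr01)) (lam2 y 1 ltr01).
by rewrite pmulr_lgt0 // lam_gt0.
Qed.

Lemma lam_exp2M_le y s k : 0 < s -> lam y (2 ^+ k * s) <= Clam ^+ k * lam y s.
Proof.
move=> s0; have C0 := upper_doubling_const_gt0 y; case: ud => _ _ _ lam2 _.
elim: k => [|k IH]; first by rewrite !expr0 !mul1r.
rewrite exprS -mulrA; apply: le_trans (lam2 _ _ _) _.
  by rewrite mulr_gt0 // exprn_gt0.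
by rewrite exprS -mulrA ler_wpM2l // ltW.
Qed.

Hypothesis mball : forall x r, measurable (ball_d dist x r).

(* The integrand is at most [1 / lam p s] and [mu D <= lam p (2^k s)]. *)
Lemma integral_inv_lam_le (p : X) (s : R) (k : nat) (D : set X) :
  0 < s -> measurable D -> D `<=` ball_d dist p (2 ^+ k * s) ->
  (forall z, D z -> s <= dist z p) ->
  (\int[mu]_(z in D) ((lam p (dist z p))^-1)%:E <= (Clam ^+ k)%:E)%E.
Proof.
move=> s0 mD DB Ds; case: (ud) => _ lam_gt0 lam_le _ mu_le.
have lam_s_gt0 := lam_gt0 p s s0; have S0 : 0 < 2 ^+ k * s by rewrite mulr_gt0 ?exprn_gt0.
apply: (@le_trans _ _ (\int[mu]_(z in D) (cst ((lam p s)^-1)%:E) z)%E).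
  apply: ge0_le_integral_nomf => z Dz; have dz := lt_le_trans s0 (Ds _ Dz).
    by rewrite lee_fin invr_ge0 ltW ?lam_gt0.
  by rewrite lee_fin lef_pV2 ?posrE ?lam_gt0 //; exact: lam_le (Ds _ Dz).
rewrite integral_cst // -lee_pdivlMl ?invr_gt0 //.
apply: le_trans (le_measure _ _ _ DB) _; rewrite ?inE //.
apply: le_trans (mu_le _ _ S0) _; rewrite -EFinM lee_fin invrK.
by rewrite [_ * Clam ^+ _]mulrC; exact: lam_exp2M_le.
Qed.

Context {rho : R} {f : X -> R} {fB : X -> R -> R} {A : R}.
Hypotheses (f_loc : L1loc dist mu f) (A_ge0 : 0 <= A).
Hypothesis rbmo : RBMO_cond dist mu lam rho f fB A.

Lemma measurable_normB_ball {p s c} : 0 < s ->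
  measurable_fun (ball_d dist p s) (fun z => (`|f z - c|)%:E).
Proof.
move=> s0; have /measurable_int/measurable_EFinP mf := f_loc p s s0.
by apply/measurable_EFinP; apply: measurableT_comp => //; exact: measurable_funB.
Qed.

Lemma RBMO_coef_le {y t x r1 k} : 0 < t -> 0 < r1 ->
  ball_d dist y t `<=` ball_d dist x r1 ->
  ball_d dist x (2 * r1) `<=` ball_d dist y (2 ^+ k * t) ->
  `|fB y t - fB x r1| <= A * (1 + Clam ^+ k).
Proof.
move=> t0 r10 yx xy; rewrite -lee_fin.
apply: le_trans (rbmo.2 y t x r1 t0 r10 yx) _.
rewrite EFinM EFinD lee_wpmul2l ?lee_fin // leeD2l //.
apply: integral_inv_lam_le t0 (measurableD (mball _ _) (mball _ _)) _ _.
- by move=> z [/xy].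
- by move=> z [_]; rewrite /ball_d /= leNgt => /negP.
Qed.

Lemma integral_normB_le y {t} c : 0 < t ->
  (\int[mu]_(z in ball_d dist y t) (`|f z - c|)%:E <=
   A%:E * mu (ball_d dist y (rho * t)) + (`|fB y t - c|)%:E * mu (ball_d dist y t))%E.
Proof.
move=> t0; apply: le_trans (leeD2r _ (rbmo.1 y t t0)).
rewrite -integral_cst // -ge0_integralD //.
- apply: ge0_le_integral_nomf => z _ //.
  by rewrite -EFinD lee_fin ler_distD.
- exact: measurable_normB_ball.
- by move=> z _; rewrite lee_fin.
Qed.

Hypotheses (dist_metric : is_metric dist) (rho_gt1 : 1 < rho).

Lemma integral_normB_small_ball_le {x r m y alpha} :
  0 < r -> 1 + rho <= 2 ^+ m -> 2 <= alpha ->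
  ball_d dist y (r / 2 ^+ m) `&` ball_d dist x r !=set0 ->
  (\int[mu]_(z in ball_d dist y (r / 2 ^+ m)) (`|f z - fB x r|)%:E <=
   (A * (3 + Clam ^+ 2 + Clam ^+ (m + 3)))%:E * mu (ball_d dist x (alpha * r)))%E.
Proof.
set t := r / 2 ^+ m; move=> r0 rho_m alpha2 [z [yz xz]].
case: dist_metric => _ dsym dtri; have C0 := upper_doubling_const_gt0 x.
have t0 : 0 < t by rewrite divr_gt0 // exprn_gt0.
have rho_t : t * (1 + rho) <= r.
  by rewrite /t mulrAC ler_pdivrMr ?exprn_gt0 // ler_pM2l.
have r8 : 2 ^+ (m + 3) * t = 8 * r by rewrite /t exprD; field; exact: expf_neq0.
have yx : dist y x < r + t.
  by have := dtri y z x; rewrite (dsym y z); move: yz xz; rewrite /ball_d /=; lra.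
have t_rhot : t < rho * t by rewrite ltr_pMl.
have r_alphar : 2 * r <= alpha * r by rewrite ler_pM2r.
have yrho_xalpha : ball_d dist y (rho * t) `<=` ball_d dist x (alpha * r).
  by move=> w; rewrite /ball_d /= => yw; have := dtri w y x; lra.
have y_yrho : ball_d dist y t `<=` ball_d dist y (rho * t).
  by move=> w; rewrite /ball_d /= => yw; lra.
have y_x2 : ball_d dist y t `<=` ball_d dist x (2 * r).
  by move=> w; rewrite /ball_d /= => yw; have := dtri w y x; lra.
have x4_y : ball_d dist x (2 * (2 * r)) `<=` ball_d dist y (2 ^+ (m + 3) * t).
  move=> w; rewrite /ball_d r8 /= => xw.
  by have := dtri w x y; rewrite (dsym x y); lra.
have r2 : 0 < 2 * r by rewrite mulr_gt0.
have coef_y := RBMO_coef_le t0 r2 y_x2 x4_y.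
have coef_x : `|fB x r - fB x (2 * r)| <= A * (1 + Clam ^+ 2).
  apply: RBMO_coef_le r0 r2 _ _ => w; rewrite /ball_d /=.
    by lra.
  by rewrite expr2 mulrA.
have coef : `|fB y t - fB x r| <= A * (2 + Clam ^+ 2 + Clam ^+ (m + 3)).
  apply: le_trans (ler_distD (fB x (2 * r)) _ _) _.
  by rewrite (distrC (fB x (2 * r))); lra.
apply: le_trans (integral_normB_le y (fB x r) t0) _.
rewrite (_ : 3 + Clam ^+ 2 + _ = 1 + (2 + Clam ^+ 2 + Clam ^+ (m + 3))); last by ring.
have K_ge0 : 0 <= 2 + Clam ^+ 2 + Clam ^+ (m + 3).
  by rewrite !addr_ge0 // exprn_ge0 // ltW.
rewrite mulrDr mulr1 EFinD ge0_muleDl ?lee_fin ?mulr_ge0 //.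
apply: leeD; first by rewrite lee_wpmul2l ?lee_fin // le_measure ?inE.
apply: lee_pmul; rewrite ?lee_fin //.
by rewrite le_measure ?inE // => w /y_yrho /yrho_xalpha.
Qed.

Lemma integral_normB_small_ballI_le {x r m alpha} y :
  0 < r -> 1 + rho <= 2 ^+ m -> 2 <= alpha ->
  (\int[mu]_(z in ball_d dist y (r / 2 ^+ m) `&` ball_d dist x r)
     (`|f z - fB x r|)%:E <=
   (A * (3 + Clam ^+ 2 + Clam ^+ (m + 3)))%:E * mu (ball_d dist x (alpha * r)))%E.
Proof.
move=> r0 rho_m alpha2; have C0 := upper_doubling_const_gt0 x.
have t0 : 0 < r / 2 ^+ m by rewrite divr_gt0 // exprn_gt0.
have [meet|/nonemptyPn ->] :=
  pselect (ball_d dist y (r / 2 ^+ m) `&` ball_d dist x r !=set0); last first.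
  rewrite integral_set0 mule_ge0 ?measure_ge0 // lee_fin mulr_ge0 //.
  by rewrite !addr_ge0 // exprn_ge0 // ltW.
apply: le_trans (integral_normB_small_ball_le r0 rho_m alpha2 meet).
apply: ge0_subset_integral => //; first exact: measurableI.
exact: measurable_normB_ball t0.
Qed.

End doubling.

Theorem lemma5p3 (R : realType) (N : nat) (Clam rho alpha beta : R) :
  1 < rho -> 2 <= alpha -> 2 <= beta ->
  exists C : R,
    forall (d0 : measure_display) (X : measurableType d0)
           (dist : X -> X -> R) (mu : {measure set X -> \bar R})
           (lam : X -> R -> R),
      is_metric dist ->
      (forall x r, measurable (ball_d dist x r)) ->
      geom_doubling dist N ->
      upper_doubling dist mu lam Clam ->
      forall (f : X -> R) (A : R) (fB : X -> R -> R),
        L1loc dist mu f -> 0 <= A ->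
        RBMO_cond dist mu lam rho f fB A ->
        forall (x : X) (r : R), 0 < r ->
          doubling_ball dist mu alpha beta x r ->
          (0 < mu (ball_d dist x r))%E ->
          `| (fine (mu (ball_d dist x r)))^-1 * Rintegral mu (ball_d dist x r) f
             - fB x r | <= C * A.
Proof.
move=> rho_gt1 alpha2 beta2.
pose m := (Num.truncn (1 + rho)).+1.
pose K := 3 + Clam ^+ 2 + Clam ^+ (m + 3).
exists ((N ^ m)%:R * (K * beta)).
move=> d0 X dist mu lam metric mball gd ud f A fB f_loc A0 rbmo x r r0 dbl muB0.
have rho_m : 1 + rho <= 2 ^+ m.
  by rewrite le_exp2_truncnS // addr_ge0 // ltW // (lt_trans ltr01).
have muBoo : (mu (ball_d dist x r) < +oo)%E by case: ud => + _ _ _ _; apply.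
have muBE : mu (ball_d dist x r) = (fine (mu (ball_d dist x r)))%:E.
  by rewrite fineK // ge0_fin_numE // measure_ge0.
have muB_gt0 : 0 < fine (mu (ball_d dist x r)) by rewrite -lte_fin -muBE.
rewrite -[_ * A](mulfK (lt0r_neq0 muB_gt0)).
apply: (normr_mean_sub_le mu) => //; first exact: f_loc.
have [s [size_s cover]] := geom_doubling_iter (x := x) m gd r0.
apply: le_trans (ge0_integral_le_sum_cover mu _ _ _ _ cover) _ => //.
  exact: (measurable_normB_ball f_loc r0).
have C0 := upper_doubling_const_gt0 ud x.
have term_le y : (\int[mu]_(z in ball_d dist y (r / 2 ^+ m) `&` ball_d dist x r)
    (`|f z - fB x r|)%:E <= (A * K * beta * fine (mu (ball_d dist x r)))%:E)%E.
  apply: le_trans (integral_normB_small_ballI_le ud mball f_loc A0 rbmo metric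
    rho_gt1 y r0 rho_m alpha2) _.
  rewrite !EFinM -muBE -!muleA lee_wpmul2l ?lee_fin //.
  by rewrite lee_wpmul2l ?lee_fin // !addr_ge0 // exprn_ge0 // ltW.
apply: le_trans (lee_sum s (fun y _ => term_le y)) _.
rewrite sumEFin lee_fin big_const_seq count_predT iter_addr_0.
rewrite [leRHS](_ : _ = (N ^ m)%:R * (A * K * beta * fine (mu (ball_d dist x r))));
  last by ring.
rewrite -[leLHS]mulr_natl; apply: ler_wpM2r; last by rewrite ler_nat.
rewrite !mulr_ge0 ?fine_ge0 ?measure_ge0 //; last exact: le_trans _ beta2.
by rewrite !addr_ge0 // exprn_ge0 // ltW.
Qed.
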